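(* For any valuation profile $\mathbf u$ (of injective valuation functions of $n$ agents over $n$ items), every optimal allocation, i.e. every matching $\mu^*$ maximizing $\sum_i u_i(\mu_i)$, is an outcome of random priority with positive probability: there exists an ordering of the agents for which the serial-dictatorship procedure produces exactly $\mu^*$.
   Context: Agents $N=\{1,\dots,n\}$, items $M=\{1,\dots,n\}$, outcomes are bijections (matchings) $\mu$ with $\mu_i$ the item of agent $i$. Each agent $i$ has an injective valuation function $u_i:M\to\mathbb R$. Random priority picks a uniformly random ordering of agents and then, in that order, gives each agent its most preferred item among those still unassigned. *)

From HB Require Import structures.
From mathcomp Require Import all_boot all_order all_algebra all_fingroup.
Set Implicit Arguments. Unset Strict Implicit. Unset Printing Implicit Defensive.
Import Order.TTheory GRing.Theory Num.Theory.
Local Open Scope ring_scope.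

(* Agents and items are both 'I_n; a valuation profile is u : agent -> item -> R,
   u i x = value of item x to agent i. Matchings are permutations of 'I_n. *)

Definition favourite (R : realDomainType) (n : nat) (u : 'I_n -> 'I_n -> R)
  (i : 'I_n) (taken : seq 'I_n) : option 'I_n :=
  [pick x | (x \notin taken) && [forall y, (y \notin taken) ==> (u i y <= u i x)]].

Fixpoint serial_dictatorship (R : realDomainType) (n : nat)
  (u : 'I_n -> 'I_n -> R) (ord : seq 'I_n) (taken : seq 'I_n)
  : seq ('I_n * 'I_n) :=
  match ord with
  | [::] => [::]
  | i :: ord' =>
      match favourite u i taken with
      | Some x => (i, x) :: serial_dictatorship u ord' (x :: taken)
      | None => serial_dictatorship u ord' taken
      end
  end.

Definition order_of (n : nat) (sigma : {perm 'I_n}) : seq 'I_n :=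
  [seq sigma k | k <- enum 'I_n].

Definition sd_produces (R : realDomainType) (n : nat) (u : 'I_n -> 'I_n -> R)
  (sigma mu : {perm 'I_n}) : Prop :=
  serial_dictatorship u (order_of sigma) [::]
  = [seq (i, mu i) | i <- order_of sigma].

Definition welfare (R : realDomainType) (n : nat) (u : 'I_n -> 'I_n -> R)
  (mu : {perm 'I_n}) : R := \sum_(i < n) u i (mu i).

From HB Require Import structures.
From mathcomp Require Import all_boot all_order all_algebra all_fingroup.
Set Implicit Arguments.
Unset Strict Implicit.
Unset Printing Implicit Defensive.

Import Order.TTheory GRing.Theory Num.Theory.
Local Open Scope ring_scope.

(* Serial dictatorship in which each agent, in turn, takes its mu-item
   reproduces mu, so it suffices to show that, whatever set S of agents is
   left, some agent in S ranks its mu-item first among the items mu(S) still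
   available.  If not, let every agent of S point to an agent of S whose
   mu-item it strictly prefers; following the pointers eventually runs around
   a cycle, and rotating the mu-items along that cycle strictly increases the
   welfare, contradicting the optimality of mu. *)

Section OnCycle.

Variables (T : finType) (f : T -> T).

Lemma exists_on_cycle_iter x : exists k, fconnect f (f (iter k f x)) (iter k f x).
Proof.
have /trajectP [i lt_i_ord Ei] := looping_order f x.
exists i; suff: iter i f x \in fconnect f (f (iter i f x)) by [].
apply/(orbitPcycle 3 2); exists (fingraph.order f x - i).-1%N.
by rewrite prednK ?subn_gt0 // -iterD subnK ?Ei // ltnW.
Qed.

Variables (c : T) (cycle_c : fconnect f (f c) c).

Definition rotate_cycle x := if fconnect f c x then f x else x.

Lemma rotate_cycle_inj : injective rotate_cycle.
Proof.
have f_inj x y : fconnect f c x -> fconnect f c y -> f x = f y -> x = y.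
  by rewrite !fconnect_orbit; apply: ((orbitPcycle 2 5).1 cycle_c).
have f_closed x : fconnect f c x -> fconnect f c (f x).
  by move/connect_trans; apply; apply: fconnect1.
move=> x y; rewrite /rotate_cycle.
case: ifP => cx; case: ifP => cy // fxy; first exact: f_inj.
- by move: (f_closed x cx); rewrite fxy cy.
- by move: (f_closed y cy); rewrite -fxy cx.
Qed.

Definition rotate_cycle_perm : {perm T} := perm rotate_cycle_inj.

End OnCycle.

Lemma welfare_lt (R : realDomainType) (n : nat) (u : 'I_n -> 'I_n -> R)
    (mu nu : {perm 'I_n}) :
  (forall i, u i (mu i) <= u i (nu i)) -> (exists i, u i (mu i) < u i (nu i)) ->
  welfare u mu < welfare u nu.
Proof.
move=> le_mu_nu [j lt_j]; rewrite /welfare (bigD1 j) //= [X in _ < X](bigD1 j) //=.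
by rewrite ltr_leD //; apply: ler_sum => i _.
Qed.

Lemma favourite_maximal (R : realDomainType) (n : nat) (u : 'I_n -> 'I_n -> R)
    (i x : 'I_n) (taken : seq 'I_n) :
  injective (u i) -> x \notin taken ->
  [forall y, (y \notin taken) ==> (u i y <= u i x)] ->
  favourite u i taken = Some x.
Proof.
move=> u_inj x_free x_max; rewrite /favourite; case: pickP => [z /andP [z_free z_max]|].
  congr Some; apply: u_inj; apply/eqP; rewrite eq_le.
  by rewrite (implyP (forallP x_max z) z_free) (implyP (forallP z_max x) x_free).
by move/(_ x); rewrite x_free x_max.
Qed.

Lemma order_of_uniq (n : nat) (s : seq 'I_n) :
  uniq s -> (forall i, i \in s) -> exists sigma : {perm 'I_n}, order_of sigma = s.
Proof.
move=> s_uniq s_full.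
have /tuple_permP [sigma ->] : perm_eq s (ord_tuple n).
  by apply: uniq_perm; rewrite ?enum_uniq // => i; rewrite s_full mem_enum.
by exists sigma; apply: eq_map => k; rewrite tnth_ord_tuple.
Qed.

Section OptimalMatching.

Variables (R : realDomainType) (n : nat) (u : 'I_n -> 'I_n -> R) (mu : {perm 'I_n}).
Hypothesis mu_opt : forall nu : {perm 'I_n}, welfare u nu <= welfare u mu.

Lemma exists_mu_top_agent (S : {set 'I_n}) (taken : seq 'I_n) :
  (forall x, (x \in taken) = ((mu^-1)%g x \notin S)) -> S != set0 ->
  exists2 i, i \in S & [forall y, (y \notin taken) ==> (u i y <= u i (mu i))].
Proof.
move=> takenE /set0Pn [i0 Si0].
apply/exists_inP; apply: contraT; rewrite negb_exists_in => /forall_inP no_top.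
have envy i : i \in S -> exists y, (y \notin taken) && (u i (mu i) < u i y).
  move=> Si; have /forallPn [y] := no_top i Si.
  by rewrite negb_imply -ltNge => ?; exists y.
pose g i := if [pick y | (y \notin taken) && (u i (mu i) < u i y)] is Some y
            then (mu^-1)%g y else i.
have gS i : i \in S -> g i \in S.
  by rewrite /g; case: pickP => // y /andP [+ _]; rewrite takenE negbK.
have g_better i : i \in S -> u i (mu i) < u i (mu (g i)).
  move=> Si; rewrite /g; case: pickP => [y /andP [_]|none]; first by rewrite permKV.
  by have [y] := envy i Si; rewrite none.
have [k cycle_c] := exists_on_cycle_iter g i0.
set c := iter k g i0 in cycle_c.
have iter_gS m x : x \in S -> iter m g x \in S.
  by elim: m => //= m IHm /IHm /gS.
have orbit_cS x : fconnect g c x -> x \in S.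
  by move=> /iter_findex <-; apply/iter_gS/iter_gS.
pose nu := (rotate_cycle_perm cycle_c * mu)%g.
have nuE i : nu i = mu (rotate_cycle g c i) by rewrite permM permE.
suff: welfare u mu < welfare u nu by rewrite ltNge mu_opt.
apply: welfare_lt.
  move=> i; rewrite nuE /rotate_cycle; case: ifP => // /orbit_cS Si.
  exact/ltW/g_better.
by exists c; rewrite nuE /rotate_cycle connect0; apply/g_better/orbit_cS.
Qed.

Hypothesis u_inj : forall i : 'I_n, injective (u i).

Lemma serial_dictatorship_mu (S : {set 'I_n}) (taken : seq 'I_n) :
  (forall x, (x \in taken) = ((mu^-1)%g x \notin S)) ->
  exists ord, [/\ uniq ord, ord =i S &
    serial_dictatorship u ord taken = [seq (i, mu i) | i <- ord]].
Proof.
have [m] := ubnP #|S|; elim: m S taken => // m IHm S taken ltSm takenE.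
have [-> | S_ne0] := eqVneq S set0; first by exists [::]; split=> // x; rewrite inE.
have [i Si i_top] := exists_mu_top_agent takenE S_ne0.
have takenE' x : (x \in mu i :: taken) = ((mu^-1)%g x \notin S :\ i).
  rewrite in_cons takenE !inE negb_and negbK.
  by congr (_ || _); apply/eqP/eqP => [->|<-]; rewrite ?permK ?permKV.
have ltSm' : (#|S :\ i| < m)%N by rewrite (cardsD1 i S) Si in ltSm.
have [ord [ord_uniq ordE sd_ord]] := IHm _ _ ltSm' takenE'.
exists (i :: ord); split => [|x|] /=.
- by rewrite ord_uniq ordE !inE eqxx.
- by rewrite in_cons ordE !inE; case: eqVneq => // ->.
- by rewrite (favourite_maximal (@u_inj i) _ i_top) ?takenE ?permK ?Si // sd_ord.
Qed.

End OptimalMatching.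

Theorem lemma2 (R : realDomainType) (n : nat) (u : 'I_n -> 'I_n -> R)
  (u_inj : forall i : 'I_n, injective (u i))
  (mu : {perm 'I_n})
  (mu_opt : forall nu : {perm 'I_n}, welfare u nu <= welfare u mu) :
  exists sigma : {perm 'I_n}, sd_produces u sigma mu.
Proof.
have takenE x : (x \in [::]) = ((mu^-1)%g x \notin [set: 'I_n]) by rewrite inE.
have [ord [ord_uniq ordE sd_ord]] := serial_dictatorship_mu mu_opt u_inj takenE.
have [sigma sigmaE] : exists sigma : {perm 'I_n}, order_of sigma = ord.
  by apply: order_of_uniq => // i; rewrite ordE inE.
by exists sigma; rewrite /sd_produces sigmaE.
Qed.
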